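(* Let $\mathbf k$ be an algebraically closed field of characteristic zero, $n\geq 1$, $\zeta\in\mathbf k$, and let $\mathcal D_{\zeta,n}$ be the monoidal category defined below. Let $k\in\mathbb N$ be divisible by $n$, say $k=ln$. Then $\mathrm{Hom}_{\mathcal D_{\zeta,n}}(k,0)$ is the $\mathbf k$-span of $f_n^{\otimes l}:k\to 0$.
   Context: $\mathcal D_{\zeta,n}$ is the strict $\mathbf k$-linear monoidal category whose objects are the natural numbers $k\in\mathbb N$ (thought of as $k$ points), with tensor product $k\otimes l=k+l$ on objects and unit $0$, and whose morphisms are generated under composition, tensor product and $\mathbf k$-linear combinations by the identity $\mathrm{id}_1$ of $1$ and two morphisms $f_n:n\to 0$ and $g_n:0\to n$, subject to the relations $f_n\circ g_n=\mathrm{id}_0$, $g_n\circ f_n=\mathrm{id}_n$, and $\mathrm{id}_1\otimes f_n=\zeta\,(f_n\otimes\mathrm{id}_1)$ as morphisms $n+1\to 1$. *)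

(* Free k-linear strict monoidal category D_{zeta,n},
   presented by generators and relations, built syntactically. *)
From HB Require Import structures.
From mathcomp Require Import all_boot all_order all_algebra.
Set Implicit Arguments. Unset Strict Implicit. Unset Printing Implicit Defensive.
Import GRing.Theory.
Local Open Scope ring_scope.

Inductive term : Type :=
  | Id of nat
  | Fg
  | Gg
  | Comp of term & term       (* Comp t s = t \o s *)
  | Tens of term & term.

Definition term_dec (x y : term) : {x = y} + {x <> y}.
Proof. decide equality; by case: (eqVneq n n0) => [->|h]; [left|right; apply/eqP]. Defined.
HB.instance Definition _ := hasDecEq.Build term (compareP term_dec).

Fixpoint typ (n : nat) (t : term) : option (nat * nat) :=
  match t with
  | Id k => Some (k, k)
  | Fg => Some (n, 0%N)
  | Gg => Some (0%N, n)
  | Comp t1 s1 =>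
      match typ n s1, typ n t1 with
      | Some (a, b), Some (b', c) => if b == b' then Some (a, c) else None
      | _, _ => None
      end
  | Tens s1 t1 =>
      match typ n s1, typ n t1 with
      | Some (a, b), Some (c, d) => Some ((a + c)%N, (b + d)%N)
      | _, _ => None
      end
  end.

Section Cat.
Variables (K : fieldType) (n : nat) (zeta : K).

(* Formal K-linear combinations of terms. *)
Definition lc := seq (K * term).
Definition wt (a b : nat) (s : lc) : bool :=
  all (fun p => typ n p.2 == Some (a, b)) s.
Definition coef (s : lc) (t : term) : K := \sum_(p <- s | p.2 == t) p.1.
Definition scale (c : K) (s : lc) : lc := [seq (c * p.1, p.2) | p <- s].
Definition compl (u : term) (s : lc) : lc := [seq (p.1, Comp u p.2) | p <- s].
Definition compr (s : lc) (u : term) : lc := [seq (p.1, Comp p.2 u) | p <- s].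
Definition tensl (s : lc) (u : term) : lc := [seq (p.1, Tens p.2 u) | p <- s].
Definition tensr (u : term) (s : lc) : lc := [seq (p.1, Tens u p.2) | p <- s].
Definition rel2 (t t' : term) : lc := [:: (1, t); (-1, t')].

(* nul a b s : the formal combination s of morphisms a -> b is zero in
   D_{zeta,n}, i.e. s lies in the smallest linear "tensor ideal" containing
   the axioms of a strict monoidal category and the defining relations. *)
Inductive nul : nat -> nat -> lc -> Prop :=
  | nul_add a b s t : nul a b s -> nul a b t -> nul a b (s ++ t)
  | nul_scale a b c s : nul a b s -> nul a b (scale c s)
  | nul_ext a b s s' : wt a b s' -> coef s =1 coef s' -> nul a b s -> nul a b s'
  | nul_compl a b c u s : typ n u = Some (b, c) -> nul a b s -> nul a c (compl u s)
  | nul_compr a b c u s : typ n u = Some (a, b) -> nul b c s -> nul a c (compr s u)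
  | nul_tensl a b c d s u : typ n u = Some (c, d) -> nul a b s ->
      nul (a + c) (b + d) (tensl s u)
  | nul_tensr a b c d u s : typ n u = Some (c, d) -> nul a b s ->
      nul (c + a) (d + b) (tensr u s)
  | ax_assoc a b c d r s t : typ n r = Some (a, b) -> typ n s = Some (b, c) ->
      typ n t = Some (c, d) -> nul a d (rel2 (Comp (Comp t s) r) (Comp t (Comp s r)))
  | ax_idl a b t : typ n t = Some (a, b) -> nul a b (rel2 (Comp (Id b) t) t)
  | ax_idr a b t : typ n t = Some (a, b) -> nul a b (rel2 (Comp t (Id a)) t)
  | ax_tassoc a b c d e f s t u : typ n s = Some (a, b) -> typ n t = Some (c, d) ->
      typ n u = Some (e, f) ->
      nul (a + c + e) (b + d + f) (rel2 (Tens (Tens s t) u) (Tens s (Tens t u)))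
  | ax_unitl a b t : typ n t = Some (a, b) -> nul a b (rel2 (Tens (Id 0) t) t)
  | ax_unitr a b t : typ n t = Some (a, b) -> nul a b (rel2 (Tens t (Id 0)) t)
  | ax_tid a b : nul (a + b) (a + b) (rel2 (Tens (Id a) (Id b)) (Id (a + b)))
  | ax_interchange a b c a' b' c' s s' t t' :
      typ n s' = Some (a, b) -> typ n s = Some (b, c) ->
      typ n t' = Some (a', b') -> typ n t = Some (b', c') ->
      nul (a + a') (c + c')
        (rel2 (Comp (Tens s t) (Tens s' t')) (Tens (Comp s s') (Comp t t')))
  | rel_fg : nul 0 0 (rel2 (Comp Fg Gg) (Id 0))
  | rel_gf : nul n n (rel2 (Comp Gg Fg) (Id n))
  | rel_twist : nul (1 + n) 1 [:: (1, Tens (Id 1) Fg); (- zeta, Tens Fg (Id 1))].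

(* Hom_{D_{zeta,n}}(a, b): well-typed formal combinations modulo nul;
   two combinations s, s' of type a -> b are equal morphisms iff
   nul a b (s ++ scale (-1) s'). *)
Definition hom_eq (a b : nat) (s s' : lc) : Prop := nul a b (s ++ scale (-1) s').

End Cat.

Fixpoint ftens (l : nat) : term :=
  match l with 0 => Id 0 | l'.+1 => Tens Fg (ftens l') end.

(* Since g_n o f_n = id_n, a diagram t : ln -> 0 factors as (t o g_n^{(x)l}) o f_n^{(x)l},
   so it suffices that t o g_n^{(x)l}, an endomorphism of 0, is a scalar.
   If zeta^n <> 1, the twist relation gives f_n (x) f_n = zeta^n f_n (x) f_n, hence
   f_n (x) f_n = 0 and id_0 = (f_n (x) f_n) o (g_n (x) g_n) = 0: the category is zero.
   If zeta^n = 1, then zeta <> 0, so f_n and g_n commute with identity strands up to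
   nonzero scalars.  Put Q_a = g_n^{(x)(a div n)} (x) id_(a mod n) : a mod n -> a.
   Induction on diagrams shows that t o Q_a and Q_b agree up to a nonzero scalar,
   written t o Q_a ~ Q_b, for every t : a -> b (note that a = b (mod n));
   the tensor step rests on Q_(a1+a2) ~ (Q_a1 (x) Q_a2) o Q_((a1 mod n)+(a2 mod n)).
   For t : ln -> 0 this says t o g_n^{(x)l} ~ id_0. *)

From mathcomp Require Import all_boot all_order all_algebra.
From mathcomp Require Import ring zify.
Set Implicit Arguments. Unset Strict Implicit. Unset Printing Implicit Defensive.
Import GRing.Theory.
Local Open Scope ring_scope.

(* Proves [typ n t != None] for a concrete diagram [t], using the typing hypotheses in
   the context and [lia] to identify the objects at each composition. *)
Ltac typecheck :=
  rewrite /=;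
  repeat match goal with H : typ _ _ = Some _ |- _ => rewrite H end;
  repeat (match goal with
          | |- context [?x == ?y] => have -> : x == y by apply/eqP; lia
          end; rewrite /=);
  by [].

Section Diagrams.
Variables (K : fieldType) (n : nat) (zeta : K).
Local Notation typ := (typ n).
Local Notation nul := (nul n zeta).
Local Notation wt := (wt n).

Lemma coef_cons (p : K * term) (s : lc K) x :
  coef (p :: s) x = p.1 * (p.2 == x)%:R + coef s x.
Proof. by rewrite /coef big_cons; case: eqP; rewrite ?mulr1 ?mulr0 ?add0r. Qed.

Lemma coef_nil x : coef ([::] : lc K) x = 0.
Proof. exact: big_nil. Qed.

Lemma coef_cat (s s' : lc K) x : coef (s ++ s') x = coef s x + coef s' x.
Proof. exact: big_cat. Qed.

Lemma coef_scale c (s : lc K) x : coef (scale c s) x = c * coef s x.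
Proof.
elim: s => [|p s IH]; first by rewrite coef_nil mulr0.
by rewrite /= !coef_cons IH mulrDr mulrA.
Qed.

Lemma nul_wt a b s : nul a b s -> wt a b s.
Proof.
rewrite /wt; elim=> {a b s} /=; intros; rewrite ?all_cat ?all_map ?andbT.
all: try (apply: sub_all; last eassumption; move=> p /eqP /= ->).
all: repeat match goal with H : typ _ = Some _ |- _ => rewrite /= H; clear H end.
all: by rewrite /= ?addnA ?addn0 ?add0n ?(addnC n 1) ?eqxx ?andbT; try apply/andP.
Qed.

Lemma nul_lincomb a b s1 s2 k s : nul a b s1 -> nul a b s2 -> wt a b s ->
  (forall x, coef s x = coef s1 x + k * coef s2 x) -> nul a b s.
Proof.
move=> h1 h2 hw hs; apply: nul_ext hw _ (nul_add h1 (nul_scale k h2)) => x.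
by rewrite coef_cat coef_scale hs.
Qed.

Lemma nul_rescale a b s1 k s : nul a b s1 -> wt a b s ->
  (forall x, coef s x = k * coef s1 x) -> nul a b s.
Proof.
by move=> h1 hw hs; apply: nul_ext hw _ (nul_scale k h1) => x; rewrite coef_scale hs.
Qed.

Definition eqZ t c u := exists a b, nul a b [:: (1, t); (- c, u)].

Lemma nul_pair_typ a b t c u : nul a b [:: (1, t); (- c, u)] ->
  typ t = Some (a, b) /\ typ u = Some (a, b).
Proof. by move/nul_wt; rewrite /wt /= andbT => /andP [/eqP -> /eqP ->]. Qed.

Lemma eqZ_refl t : typ t != None -> eqZ t 1 t.
Proof.
case E: (typ t) => [[a b]|] // _; exists a, b.
apply: (nul_rescale (k := 0) (ax_idl zeta E)); first by rewrite /wt /= E eqxx.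
by move=> x; rewrite !coef_cons coef_nil /=; ring.
Qed.

Lemma eqZ_trans t c u d v : eqZ t c u -> eqZ u d v -> eqZ t (c * d) v.
Proof.
move=> [a [b h1]] [a' [b' h2]].
have [ht hu] := nul_pair_typ h1; have [hu' hv] := nul_pair_typ h2.
move: hu'; rewrite hu => -[? ?]; subst a' b'; exists a, b.
apply: (nul_lincomb (k := c) h1 h2); first by rewrite /wt /= ht hv !eqxx.
by move=> x; rewrite !coef_cons !coef_nil /=; ring.
Qed.

Lemma eqZ_sym t c u : c != 0 -> eqZ t c u -> eqZ u c^-1 t.
Proof.
move=> c0 [a [b h]]; have [ht hu] := nul_pair_typ h; exists a, b.
apply: (nul_rescale (k := - c^-1) h); first by rewrite /wt /= ht hu !eqxx.
by move=> x; rewrite !coef_cons !coef_nil /=; field.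
Qed.

Lemma eqZ1_trans t u c v : eqZ t 1 u -> eqZ u c v -> eqZ t c v.
Proof. by move=> h1 h2; rewrite -[c]mul1r; apply: eqZ_trans h1 h2. Qed.

Lemma eqZ_trans1 t c u v : eqZ t c u -> eqZ u 1 v -> eqZ t c v.
Proof. by move=> h1 h2; rewrite -[c]mulr1; apply: eqZ_trans h1 h2. Qed.

Lemma eqZ1_sym t u : eqZ t 1 u -> eqZ u 1 t.
Proof. by move=> h; rewrite -invr1; apply: eqZ_sym (oner_neq0 _) h. Qed.

Lemma eqZ_compl w t c u : eqZ t c u -> typ (Comp w t) != None ->
  eqZ (Comp w t) c (Comp w u).
Proof.
move=> [a [b h]]; have [ht _] := nul_pair_typ h; rewrite /= ht.
case E: (typ w) => [[b' d]|] //; case: (b =P b') => [? _|//]; subst b'.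
by exists a, d; apply: nul_compl E h.
Qed.

Lemma eqZ_compr w t c u : eqZ t c u -> typ (Comp t w) != None ->
  eqZ (Comp t w) c (Comp u w).
Proof.
move=> [a [b h]]; have [ht _] := nul_pair_typ h; rewrite /= ht.
case E: (typ w) => [[a' b']|] //; case: (b' =P a) => [? _|//]; subst b'.
by exists a', b; apply: nul_compr E h.
Qed.

Lemma eqZ_tensl w t c u : eqZ t c u -> typ w != None -> eqZ (Tens t w) c (Tens u w).
Proof.
move=> [a [b h]]; case E: (typ w) => [[c' d]|] // _.
by exists (a + c')%N, (b + d)%N; apply: nul_tensl E h.
Qed.

Lemma eqZ_tensr w t c u : eqZ t c u -> typ w != None -> eqZ (Tens w t) c (Tens w u).
Proof.
move=> [a [b h]]; case E: (typ w) => [[c' d]|] // _.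
by exists (c' + a)%N, (d + b)%N; apply: nul_tensr E h.
Qed.

Lemma eqZ_assoc r s t : typ (Comp t (Comp s r)) != None ->
  eqZ (Comp (Comp t s) r) 1 (Comp t (Comp s r)).
Proof.
rewrite /=; case Er: (typ r) => [[a b]|] //; case Es: (typ s) => [[b' c]|] //.
case: (b =P b') => [?|//]; subst b'; case Et: (typ t) => [[c' d]|] //.
case: (c =P c') => [? _|//]; subst c'.
by exists a, d; apply: ax_assoc Er Es Et.
Qed.

Lemma eqZ_idl t a b : typ t = Some (a, b) -> eqZ (Comp (Id b) t) 1 t.
Proof. by move=> h; exists a, b; apply: ax_idl h. Qed.

Lemma eqZ_idr t a b : typ t = Some (a, b) -> eqZ (Comp t (Id a)) 1 t.
Proof. by move=> h; exists a, b; apply: ax_idr h. Qed.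

Lemma eqZ_tassoc s t u : typ s != None -> typ t != None -> typ u != None ->
  eqZ (Tens (Tens s t) u) 1 (Tens s (Tens t u)).
Proof.
case E1: (typ s) => [[a b]|] // _; case E2: (typ t) => [[c d]|] // _.
case E3: (typ u) => [[e f]|] // _.
by exists (a + c + e)%N, (b + d + f)%N; apply: ax_tassoc E1 E2 E3.
Qed.

Lemma eqZ_unitl t : typ t != None -> eqZ (Tens (Id 0) t) 1 t.
Proof. by case E: (typ t) => [[a b]|] // _; exists a, b; apply: ax_unitl E. Qed.

Lemma eqZ_unitr t : typ t != None -> eqZ (Tens t (Id 0)) 1 t.
Proof. by case E: (typ t) => [[a b]|] // _; exists a, b; apply: ax_unitr E. Qed.

Lemma eqZ_tid a b : eqZ (Tens (Id a) (Id b)) 1 (Id (a + b)).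
Proof. by exists (a + b)%N, (a + b)%N; apply: ax_tid. Qed.

Lemma eqZ_interchange s t s' t' : typ (Comp s s') != None -> typ (Comp t t') != None ->
  eqZ (Comp (Tens s t) (Tens s' t')) 1 (Tens (Comp s s') (Comp t t')).
Proof.
rewrite /=; case E1: (typ s') => [[a b]|] //; case E2: (typ s) => [[b' c]|] //.
case: (b =P b') => [? _|//]; subst b'; case E3: (typ t') => [[a' b2]|] //.
case E4: (typ t) => [[b2' c']|] //; case: (b2 =P b2') => [? _|//]; subst b2'.
by exists (a + a')%N, (c + c')%N; apply: ax_interchange E1 E2 E3 E4.
Qed.

Lemma eqZ_fg : eqZ (Comp Fg Gg) 1 (Id 0).
Proof. by exists 0%N, 0%N; apply: rel_fg. Qed.

Lemma eqZ_gf : eqZ (Comp Gg Fg) 1 (Id n).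
Proof. by exists n, n; apply: rel_gf. Qed.

Lemma eqZ_twist : eqZ (Tens (Id 1) Fg) zeta (Tens Fg (Id 1)).
Proof. by exists (1 + n)%N, 1%N; apply: rel_twist. Qed.

Lemma eqZ_twist_id m : eqZ (Tens (Id m) Fg) (zeta ^+ m) (Tens Fg (Id m)).
Proof.
elim: m => [|m IH].
  by rewrite expr0; apply: eqZ1_trans (eqZ_unitl _) (eqZ1_sym (eqZ_unitr _)).
rewrite exprSr.
apply: eqZ1_trans; first exact: eqZ_tensl (eqZ1_sym (eqZ_tid 1 m)) _.
apply: eqZ1_trans; first exact: eqZ_tassoc.
apply: eqZ_trans; first exact: eqZ_tensr IH _.
apply: eqZ1_trans; first exact: eqZ1_sym (eqZ_tassoc _ _ _).
apply: eqZ_trans1; first exact: eqZ_tensl eqZ_twist _.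
apply: eqZ1_trans; first exact: eqZ_tassoc.
exact: eqZ_tensr (eqZ_tid 1 m) _.
Qed.

Lemma eqZ_twist_ff : eqZ (Tens Fg Fg) (zeta ^+ n) (Tens Fg Fg).
Proof.
have idrF := @eqZ_idr Fg n 0 erefl; have idlF := @eqZ_idl Fg n 0 erefl.
apply: eqZ1_trans; first exact: eqZ_tensl (eqZ1_sym idrF) _.
apply: eqZ1_trans; first by apply: eqZ_tensr (eqZ1_sym idlF) _; typecheck.
apply: eqZ1_trans; first by apply: eqZ1_sym; apply: eqZ_interchange; typecheck.
apply: eqZ1_trans; first by apply: eqZ_compr (eqZ_unitr _) _; typecheck.
apply: eqZ_trans1; first by apply: eqZ_compl (eqZ_twist_id n) _; typecheck.
apply: eqZ1_trans; first by apply: eqZ_compr (eqZ1_sym (eqZ_unitl _)) _; typecheck.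
apply: eqZ1_trans; first by apply: eqZ_interchange; typecheck.
apply: eqZ1_trans; first by apply: eqZ_tensl idlF _; typecheck.
exact: eqZ_tensr idrF _.
Qed.

Lemma eqZ0_fixed t c : c != 1 -> eqZ t c t -> eqZ t 0 t.
Proof.
move=> c1 [a [b h]]; have [ht _] := nul_pair_typ h; exists a, b.
apply: (nul_rescale (k := (1 - c)^-1) h); first by rewrite /wt /= ht eqxx.
move=> x; rewrite !coef_cons !coef_nil /=; field.
by rewrite subr_eq0 eq_sym.
Qed.

Lemma eqZ0_any t u : eqZ t 0 t -> typ u = typ t -> eqZ t 0 u.
Proof.
move=> [a [b h]] hu; have [ht _] := nul_pair_typ h; exists a, b.
apply: (nul_rescale (k := 1) h); first by rewrite /wt /= hu ht eqxx.
by move=> x; rewrite !coef_cons !coef_nil /=; ring.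
Qed.

Lemma eqZ_id0_ffgg : eqZ (Id 0) 1 (Comp (Tens Fg Fg) (Tens Gg Gg)).
Proof.
apply: eqZ1_trans; first exact: eqZ1_sym (eqZ_tid 0 0).
apply: eqZ1_trans; first exact: eqZ_tensl (eqZ1_sym eqZ_fg) _.
apply: eqZ1_trans; first by apply: eqZ_tensr (eqZ1_sym eqZ_fg) _; typecheck.
by apply: eqZ1_sym; apply: eqZ_interchange; typecheck.
Qed.

Lemma eqZ0_of_twist t u : zeta ^+ n != 1 -> typ t != None -> typ u = typ t ->
  eqZ t 0 u.
Proof.
move=> zn1 ht hu; apply: eqZ0_any hu.
have ffgg0 : eqZ (Comp (Tens Fg Fg) (Tens Gg Gg)) 0 (Comp (Tens Fg Fg) (Tens Gg Gg)).
  by apply: eqZ_compr (eqZ0_fixed zn1 eqZ_twist_ff) _; typecheck.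
have id0 : eqZ (Id 0) 0 (Id 0).
  have := eqZ_trans (eqZ_trans eqZ_id0_ffgg ffgg0) (eqZ1_sym eqZ_id0_ffgg).
  by rewrite mul1r mulr1.
apply: eqZ1_trans; first exact: eqZ1_sym (eqZ_unitr ht).
apply: eqZ_trans1; first exact: eqZ_tensr id0 ht.
exact: eqZ_unitr.
Qed.

Definition propto t u := exists2 c, c != 0 & eqZ t c u.

Lemma eqZ1_propto t u : eqZ t 1 u -> propto t u.
Proof. by exists 1; rewrite ?oner_neq0. Qed.

Lemma propto_trans t u v : propto t u -> propto u v -> propto t v.
Proof.
by move=> [c c0 h1] [d d0 h2]; exists (c * d); [apply: mulf_neq0 | apply: eqZ_trans h1 h2].
Qed.

Lemma eqZ1_propto_trans t u v : eqZ t 1 u -> propto u v -> propto t v.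
Proof. by move/eqZ1_propto; apply: propto_trans. Qed.

Lemma propto_sym t u : propto t u -> propto u t.
Proof. by move=> [c c0 h]; exists c^-1; [apply: invr_neq0 | apply: eqZ_sym]. Qed.

Lemma propto_compl w t u : propto t u -> typ (Comp w t) != None ->
  propto (Comp w t) (Comp w u).
Proof. by move=> [c c0 h] hw; exists c => //; apply: eqZ_compl. Qed.

Lemma propto_compr w t u : propto t u -> typ (Comp t w) != None ->
  propto (Comp t w) (Comp u w).
Proof. by move=> [c c0 h] hw; exists c => //; apply: eqZ_compr. Qed.

Lemma propto_tensl w t u : propto t u -> typ w != None -> propto (Tens t w) (Tens u w).
Proof. by move=> [c c0 h] hw; exists c => //; apply: eqZ_tensl. Qed.

Lemma propto_tensr w t u : propto t u -> typ w != None -> propto (Tens w t) (Tens w u).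
Proof. by move=> [c c0 h] hw; exists c => //; apply: eqZ_tensr. Qed.

Hypothesis zeta0 : zeta != 0.

Lemma propto_twist_f m : propto (Tens Fg (Id m)) (Tens (Id m) Fg).
Proof. by apply: propto_sym; exists (zeta ^+ m); [apply: expf_neq0 | apply: eqZ_twist_id]. Qed.

Lemma eqZ_id_gf_tens m : eqZ (Id (n + m)) 1 (Comp (Tens Gg (Id m)) (Tens Fg (Id m))).
Proof.
apply: eqZ1_trans; first exact: eqZ1_sym (eqZ_tid n m).
apply: eqZ1_trans; first exact: eqZ_tensl (eqZ1_sym eqZ_gf) _.
apply: eqZ1_trans; first by apply: eqZ_tensr (eqZ1_sym (@eqZ_idl (Id m) m m erefl)) _.
by apply: eqZ1_sym; apply: eqZ_interchange; typecheck.
Qed.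

Lemma propto_twist_g m : propto (Tens (Id m) Gg) (Tens Gg (Id m)).
Proof.
have idlG : typ (Tens (Id m) Gg) = Some (m, (n + m)%N) by rewrite /= addn0 addnC.
apply: eqZ1_propto_trans; first exact: eqZ1_sym (eqZ_idl idlG).
apply: eqZ1_propto_trans; first by apply: eqZ_compr (eqZ_id_gf_tens m) _; typecheck.
apply: eqZ1_propto_trans; first by apply: eqZ_assoc; typecheck.
apply: propto_trans.
  by apply: propto_compl; [apply: propto_compr (propto_twist_f m) _ | ]; typecheck.
apply: eqZ1_propto_trans; first by apply: eqZ_compl (eqZ_interchange _ _) _; typecheck.
apply: eqZ1_propto_trans.
  apply: eqZ_compl; last by typecheck.
  apply: eqZ1_trans; first by apply: eqZ_tensl (@eqZ_idl (Id m) m m erefl) _; typecheck.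
  by apply: eqZ_tensr eqZ_fg _; typecheck.
apply: eqZ1_propto_trans; first by apply: eqZ_compl (eqZ_unitr _) _; typecheck.
by apply: eqZ1_propto; apply: eqZ_idr; typecheck.
Qed.

Fixpoint gtens (q : nat) (Z : term) : term :=
  if q is q'.+1 then Tens Gg (gtens q' Z) else Z.

Lemma typ_gtens q Z a b : typ Z = Some (a, b) ->
  typ (gtens q Z) = Some (a, (q * n + b)%N).
Proof. by move=> hZ; elim: q => [|q IH] //=; rewrite IH add0n mulSn addnA. Qed.

Lemma typ_gtens_id q x : typ (gtens q (Id x)) = Some (x, (q * n + x)%N).
Proof. exact: typ_gtens. Qed.

Lemma gtens_typed q Z : typ Z != None -> typ (gtens q Z) != None.
Proof. by case E: (typ Z) => [[a b]|] // _; rewrite (typ_gtens _ E). Qed.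

Lemma gtens_add q e Z : gtens q (gtens e Z) = gtens (q + e) Z.
Proof. by elim: q => //= q ->. Qed.

Lemma eqZ_gtens_tensA q Z X : typ Z != None -> typ X != None ->
  eqZ (Tens (gtens q Z) X) 1 (gtens q (Tens Z X)).
Proof.
move=> hZ hX; elim: q => [|q IH] /=.
  by apply: eqZ_refl; move: hZ hX => /=; case: (typ Z) => [[]|]; case: (typ X) => [[]|].
apply: eqZ1_trans; first by apply: eqZ_tassoc => //; apply: gtens_typed.
exact: eqZ_tensr IH _.
Qed.

Lemma propto_gtens q Z Z' : propto Z Z' -> propto (gtens q Z) (gtens q Z').
Proof. by move=> h; elim: q => [|q IH] //=; apply: propto_tensr. Qed.

Lemma propto_id_gtens m q Z : typ Z != None ->
  propto (Tens (Id m) (gtens q Z)) (gtens q (Tens (Id m) Z)).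
Proof.
move=> hZ; elim: q => [|q IH] /=.
  by apply/eqZ1_propto/eqZ_refl; move: hZ => /=; case: (typ Z) => [[]|].
apply: eqZ1_propto_trans; first by apply/eqZ1_sym/eqZ_tassoc => //; apply: gtens_typed.
apply: propto_trans; first by apply: propto_tensl (propto_twist_g m) _; apply: gtens_typed.
apply: eqZ1_propto_trans; first by apply: eqZ_tassoc => //; apply: gtens_typed.
exact: propto_tensr IH _.
Qed.

Lemma eqZ_gtens_id_comp q x Y y : typ Y = Some (y, x) ->
  eqZ (Comp (gtens q (Id x)) Y) 1 (gtens q Y).
Proof.
move=> hY; elim: q => [|q IH] /=; first exact: eqZ_idl hY.
have typGI := typ_gtens_id q x.
apply: eqZ1_trans; first by apply: eqZ_compl (eqZ1_sym (eqZ_unitl _)) _; typecheck.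
apply: eqZ1_trans; first by apply: eqZ_interchange; typecheck.
apply: eqZ1_trans; first by apply: eqZ_tensl (@eqZ_idr Gg 0 n erefl) _; typecheck.
exact: eqZ_tensr IH _.
Qed.

Lemma propto_gtens_merge q r q' r' e rho : (r + r')%N = (e * n + rho)%N ->
  propto (Comp (Tens (gtens q (Id r)) (gtens q' (Id r'))) (gtens e (Id rho)))
         (gtens (q + q' + e) (Id rho)).
Proof.
move=> hr.
have merge : propto (Tens (gtens q (Id r)) (gtens q' (Id r')))
                    (gtens (q + q') (Id (r + r'))).
  apply: eqZ1_propto_trans; first by apply: eqZ_gtens_tensA => //; apply: gtens_typed.
  apply: propto_trans; first by apply/propto_gtens/propto_id_gtens.
  by rewrite gtens_add; apply/propto_gtens/eqZ1_propto/eqZ_tid.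
rewrite hr in merge.
apply: propto_trans; first by apply: propto_compr merge _; rewrite /= !typ_gtens_id; typecheck.
rewrite -(gtens_add (q + q') e); apply/eqZ1_propto/eqZ_gtens_id_comp.
exact: typ_gtens.
Qed.

Lemma typ_CompE t s a c : typ (Comp t s) = Some (a, c) ->
  exists b, typ s = Some (a, b) /\ typ t = Some (b, c).
Proof.
rewrite /=; case: (typ s) => [[a' b]|] //; case: (typ t) => [[b' c']|] //.
by case: (b =P b') => // <- [<- <-]; exists b.
Qed.

Lemma typ_TensE s t x y : typ (Tens s t) = Some (x, y) -> exists a b c d,
  [/\ typ s = Some (a, b), typ t = Some (c, d), x = (a + c)%N & y = (b + d)%N].
Proof.
rewrite /=; case: (typ s) => [[a b]|] //; case: (typ t) => [[c d]|] // [<- <-].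
by exists a, b, c, d.
Qed.

Lemma typ_modn t a b : typ t = Some (a, b) -> (a %% n = b %% n)%N.
Proof.
elim: t a b => [k|||t IHt s IHs|s IHs t IHt] a b.
- by case=> <- <-.
- by case=> <- <-; rewrite modnn mod0n.
- by case=> <- <-; rewrite modnn mod0n.
- by case/typ_CompE => b' [/IHs -> /IHt ->].
- case/typ_TensE => a1 [b1 [a2 [b2 [/IHs h1 /IHt h2 -> ->]]]].
  by rewrite -modnDm h1 h2 modnDm.
Qed.

Definition gform a := gtens (a %/ n) (Id (a %% n)).

Lemma typ_gform a : typ (gform a) = Some ((a %% n)%N, a).
Proof. by rewrite /gform typ_gtens_id -divn_eq. Qed.

Hypothesis n_gt0 : (0 < n)%N.

Lemma gform0 : gform 0 = Id 0.
Proof. by rewrite /gform div0n mod0n. Qed.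

Lemma gformMn l : gform (l * n) = gtens l (Id 0).
Proof. by rewrite /gform mulnK // modnMl. Qed.

Lemma propto_gform_tens a1 a2 :
  propto (Comp (Tens (gform a1) (gform a2)) (gform (a1 %% n + a2 %% n)%N))
         (gform (a1 + a2)).
Proof.
set r := (a1 %% n + a2 %% n)%N.
have -> : gform (a1 + a2) = gtens (a1 %/ n + a2 %/ n + r %/ n)%N (Id (r %% n)%N).
  have -> : (a1 + a2 = (a1 %/ n + a2 %/ n) * n + r)%N.
    by rewrite mulnDl {1}(divn_eq a1 n) {1}(divn_eq a2 n) /r; ring.
  by rewrite /gform divnMDl // modnMDl.
by apply: propto_gtens_merge; rewrite -divn_eq.
Qed.

Lemma propto_comp_gform t a b : typ t = Some (a, b) ->
  propto (Comp t (gform a)) (gform b).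
Proof.
elim: t a b => [k|||t IHt s IHs|s IHs t IHt] a b.
- by case=> <- <-; apply/eqZ1_propto/eqZ_idl/typ_gform.
- case=> <- <-; rewrite gform0 /gform divnn n_gt0 modnn /=.
  apply/eqZ1_propto/eqZ1_trans; last exact: eqZ_fg.
  by apply: eqZ_compl (eqZ_unitr _) _; typecheck.
- case=> <- <-; rewrite gform0 /gform divnn n_gt0 modnn /=.
  apply/eqZ1_propto/eqZ1_trans; first exact: (@eqZ_idr Gg 0 n erefl).
  by apply/eqZ1_sym/eqZ_unitr.
- case/typ_CompE => c [hs ht].
  have typed : typ (Comp t (Comp s (gform a))) != None by rewrite /= typ_gform; typecheck.
  apply: eqZ1_propto_trans; first exact: eqZ_assoc typed.
  apply: propto_trans (IHt _ _ ht).
  by apply: propto_compl (IHs _ _ hs) _; rewrite /= typ_gform; typecheck.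
- case/typ_TensE => a1 [b1 [a2 [b2 [hs ht -> ->]]]].
  have [m1 m2] := (typ_modn hs, typ_modn ht).
  apply: propto_trans.
    apply: propto_compl (propto_sym (propto_gform_tens a1 a2)) _.
    by rewrite /= !typ_gform; typecheck.
  apply: eqZ1_propto_trans.
    by apply/eqZ1_sym/eqZ_assoc; rewrite /= !typ_gform; typecheck.
  apply: eqZ1_propto_trans.
    by apply: eqZ_compr (eqZ_interchange _ _) _; rewrite /= !typ_gform; typecheck.
  apply: propto_trans.
    by apply: propto_compr (propto_tensl (IHs _ _ hs) _) _;
      rewrite /= !typ_gform; typecheck.
  apply: propto_trans.
    by apply: propto_compr (propto_tensr (IHt _ _ ht) _) _;
      rewrite /= !typ_gform; typecheck.
  by rewrite m1 m2; apply: propto_gform_tens.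
Qed.

Lemma typ_ftens l : typ (ftens l) = Some ((l * n)%N, 0%N).
Proof. by elim: l => [|l IH] //=; rewrite IH mulSn. Qed.

Lemma eqZ_gtens_ftens l : eqZ (Comp (gtens l (Id 0)) (ftens l)) 1 (Id (l * n)).
Proof.
elim: l => [|l IH] /=; first exact: (@eqZ_idl (Id 0) 0 0 erefl).
have [typGI typF] := (typ_gtens_id l 0, typ_ftens l).
apply: eqZ1_trans; first by apply: eqZ_interchange; typecheck.
apply: eqZ1_trans; first by apply: eqZ_tensl eqZ_gf _; typecheck.
apply: eqZ1_trans; first exact: eqZ_tensr IH _.
by rewrite mulSn; apply: eqZ_tid.
Qed.

Lemma propto_ftens t l : typ t = Some ((l * n)%N, 0%N) -> propto t (ftens l).
Proof.
move=> ht; have [typGI typF] := (typ_gtens_id l 0, typ_ftens l).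
apply: eqZ1_propto_trans; first exact: eqZ1_sym (eqZ_idr ht).
apply: eqZ1_propto_trans.
  by apply: eqZ_compl (eqZ1_sym (eqZ_gtens_ftens l)) _; typecheck.
apply: eqZ1_propto_trans; first by apply/eqZ1_sym/eqZ_assoc; typecheck.
apply: propto_trans.
  apply: propto_compr _ _; last by typecheck.
  by have := propto_comp_gform ht; rewrite gformMn gform0; apply.
exact/eqZ1_propto/eqZ_idl/typF.
Qed.

End Diagrams.

Lemma hom_eq_multiple (K : fieldType) n (zeta : K) a b F (s : lc K) :
  (forall t, typ n t = Some (a, b) -> exists c, eqZ n zeta t c F) ->
  typ n F = Some (a, b) -> wt n a b s -> exists c, hom_eq n zeta a b s [:: (c, F)].
Proof.
move=> multF hF; elim: s => [_|[x t] s IH /andP [/eqP /= ht /IH [c' hs]]].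
  have [c [a' [b' h]]] := multF _ hF.
  have [hF' _] := nul_pair_typ h; move: hF'; rewrite hF => -[? ?]; subst a' b'.
  exists 0; apply: (nul_rescale (k := 0) h); first by rewrite /wt /= hF eqxx.
  by move=> y; rewrite !coef_cons !coef_nil /=; ring.
have [c [a' [b' h]]] := multF _ ht.
have [ht' _] := nul_pair_typ h; move: ht'; rewrite ht => -[? ?]; subst a' b'.
exists (x * c + c'); apply: (nul_lincomb (k := x) hs h).
  by move: (nul_wt hs); rewrite /wt /= !all_cat /= ht hF eqxx /= !andbT.
by move=> y; rewrite /= !coef_cons !coef_cat !coef_cons !coef_nil /=; ring.
Qed.

Unset Implicit Arguments.

Theorem mainTheorem11 (K : closedFieldType) (hK : [pchar K] =i pred0)
  (n : nat) (hn : (1 <= n)%N) (zeta : K) (k l : nat) (hk : k = (l * n)%N)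
  (s : lc K) (hs : wt n k 0 s) :
  exists c : K, hom_eq n zeta k 0 s [:: (c, ftens l)].
Proof.
subst k; apply: hom_eq_multiple hs; last exact: typ_ftens.
move=> t ht; have [zn1|zn1] := eqVneq (zeta ^+ n) 1.
  have zeta0 : zeta != 0 by move: (oner_neq0 K); rewrite -zn1 expf_eq0 hn.
  by have [c _ h] := propto_ftens zeta0 hn ht; exists c.
by exists 0; apply: eqZ0_of_twist zn1 _ _; rewrite ht ?typ_ftens.
Qed.
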